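(* Let $a,M$ be positive integers and let $\lambda=\lambda_1/\lambda_2$ with $\lambda_1,\lambda_2$ coprime integers, $\lambda_2\ge1$. Call a positive integer $L$ feasible (for $a,M,\lambda$) if $a\mid L$, $M\mid L$, $\frac{L}{a}\lambda\in\mathbb{Z}$ and $\frac{L}{M}\lambda\in\mathbb{Z}$. Then the minimal feasible $L$ is $L_{\min}=\lambda_2\,\mathrm{lcm}(a,M)$, and every feasible $L$ is a multiple of $L_{\min}$.
   Context: Interpretation: $L$ is the signal length, $a$ the time shift, $M$ the number of frequency channels (frequency shift $b=L/M$), and $\lambda$ the relative shear, so that the shear parameter is $s=\lambda b$; the conditions in the definition of feasibility are exactly those for these parameters to define a lattice (subgroup) of $\mathbb{Z}_L^2$ generated by $(a,s)^T$ and $(0,b)^T$ in normal form. *)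

From HB Require Import structures.
From mathcomp Require Import all_boot all_order all_algebra.
Set Implicit Arguments. Unset Strict Implicit. Unset Printing Implicit Defensive.
Import Order.TTheory GRing.Theory Num.Theory.
Local Open Scope ring_scope.

Definition feasible (a M : nat) (lam : rat) (L : nat) : Prop :=
  [/\ (0 < L)%N, (a %| L)%N, (M %| L)%N,
      (L%:R / a%:R) * lam \is a Num.int
    & (L%:R / M%:R) * lam \is a Num.int].

From HB Require Import structures.
From mathcomp Require Import all_boot all_order all_algebra.
Import Order.TTheory GRing.Theory Num.Theory.

(* Since l1 and l2 are coprime, (L/a) * l1/l2 is an integer exactly when
   l2 divides L/a, i.e. when l2 * a divides L. Feasibility therefore means
   that both l2 * a and l2 * M divide L, i.e. that l2 * lcm(a, M) divides L. *)

Local Open Scope ring_scope.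

Lemma natr_mul_frac_intE (k : nat) (l1 : int) (l2 : nat) :
  (0 < l2)%N -> coprimez l1 l2 ->
  (k%:R * (l1%:~R / l2%:R) : rat) \is a Num.int = (l2 %| k)%N.
Proof.
move=> l2_gt0 cop.
have -> : (k%:R * (l1%:~R / l2%:R) : rat) = (k%:Z * l1)%:~R / l2%:~R.
  by rewrite rmorphM /= mulrA.
have -> : (l2 %| k)%N = (l2%:Z %| k%:Z * l1)%Z by rewrite Gauss_dvdzl // coprimez_sym.
apply/idP/idP; last exact: Qint_dvdz.
set x := (_ / _ : rat) => x_int; apply/dvdzP; exists (numq x).
apply: (@intr_inj rat); rewrite [RHS]rmorphM /= numqK // /x divfK //.
by rewrite intr_eq0 eqz_nat -lt0n.
Qed.

Lemma quotient_mul_frac_intE (a L : nat) (l1 : int) (l2 : nat) :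
  (0 < a)%N -> (0 < l2)%N -> coprimez l1 l2 -> (a %| L)%N ->
  (L%:R / a%:R * (l1%:~R / l2%:R) : rat) \is a Num.int = (l2 * a %| L)%N.
Proof.
move=> a_gt0 l2_gt0 cop aL.
have -> : (L%:R / a%:R : rat) = (L %/ a)%:R.
  by rewrite -{1}(divnK aL) natrM mulfK // pnatr_eq0 -lt0n.
by rewrite natr_mul_frac_intE // -{2}(divnK aL) dvdn_pmul2r.
Qed.

Lemma feasibleE (a M : nat) (l1 : int) (l2 : nat) (L : nat) :
  (0 < a)%N -> (0 < M)%N -> (0 < l2)%N -> coprimez l1 l2 ->
  feasible a M (l1%:~R / l2%:R) L <-> (0 < L)%N /\ (l2 * lcmn a M %| L)%N.
Proof.
move=> a_gt0 M_gt0 l2_gt0 cop; rewrite muln_lcmr dvdn_lcm.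
split=> [[L_gt0 aL ML] | [L_gt0 /andP[laL lML]]].
  by rewrite !quotient_mul_frac_intE // => -> ->.
have aL : (a %| L)%N := dvdn_trans (dvdn_mull l2 (dvdnn a)) laL.
have ML : (M %| L)%N := dvdn_trans (dvdn_mull l2 (dvdnn M)) lML.
by split; rewrite ?quotient_mul_frac_intE.
Qed.

Theorem proposition3p7 (a M : nat) (l1 : int) (l2 : nat) :
  (0 < a)%N -> (0 < M)%N -> (1 <= l2)%N -> coprimez l1 (Posz l2) ->
  let lam : rat := (l1%:~R / l2%:R)%R in
  let Lmin := (l2 * lcmn a M)%N in
  [/\ feasible a M lam Lmin,
      (forall L, feasible a M lam L -> (Lmin <= L)%N)
    & (forall L, feasible a M lam L -> (Lmin %| L)%N)].
Proof.
move=> a_gt0 M_gt0 l2_gt0 cop lam Lmin.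
have feasL L : feasible a M lam L <-> (0 < L)%N /\ (Lmin %| L)%N by exact: feasibleE.
split=> [|L /feasL[L_gt0 LminL]|L /feasL[] //].
- by apply/feasL; rewrite dvdnn muln_gt0 lcmn_gt0 a_gt0 M_gt0 l2_gt0.
- exact: dvdn_leq.
Qed.
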